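(* Let $E$ be an $mw$-complete Banach $f$-algebra. Then the following are equivalent: (1) $E$ is $mw$-continuous; (2) whenever $0\le x_\alpha\uparrow\le x$ holds in $E$, the net $(x_\alpha)$ is $mw$-Cauchy; (3) for every net $(x_\alpha)$ in $E$, $x_\alpha\downarrow0$ implies $x_\alpha\xrightarrow{mw}0$.
   Context: All vector lattices are real and Archimedean. An $f$-algebra is a vector lattice with an associative multiplication making it an algebra, such that products of positive elements are positive and $x\wedge y=0$ implies $(xz)\wedge y=(zx)\wedge y=0$ for all $z\ge0$. A Banach $f$-algebra is an $f$-algebra which is a Banach lattice with $\|xy\|\le\|x\|\|y\|$. A net $(x_\alpha)$ in $E$ $mw$-converges to $x$ ($x_\alpha\xrightarrow{mw}x$) if $|x_\alpha-x|u\to0$ weakly for every $u\in E_+$. A net $(x_\alpha)_{\alpha\in A}$ is $mw$-Cauchy if the net $(x_\alpha-x_{\alpha'})_{(\alpha,\alpha')\in A\times A}$ $mw$-converges to $0$; $E$ is $mw$-complete if every $mw$-Cauchy net in $E$ is $mw$-convergent. A net order converges to $x$ ($x_\alpha\xrightarrow{o}x$) if there is a net $y_\beta\downarrow0$ such that for every $\beta$ there is $\alpha_0$ with $|x_\alpha-x|\le y_\beta$ for $\alpha\ge\alpha_0$. $E$ is $mw$-continuous if $x_\alpha\xrightarrow{o}0$ implies $x_\alpha\xrightarrow{mw}0$. *)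

From HB Require Import structures.
From mathcomp Require Import all_boot all_order all_algebra.
From mathcomp Require Import all_classical all_reals all_analysis.
Set Implicit Arguments. Unset Strict Implicit. Unset Printing Implicit Defensive.
Import Order.TTheory GRing.Theory Num.Theory.
Import numFieldNormedType.Exports.
Local Open Scope ring_scope.

(* No unit is assumed. *)
Record BanachFAlgebra (R : realType) (E : completeNormedModType R) := {
  le : E -> E -> Prop;
  join : E -> E -> E;
  meet : E -> E -> E;
  mul : E -> E -> E;
  le_refl : forall x, le x x;
  le_trans : forall x y z, le x y -> le y z -> le x z;
  le_anti : forall x y, le x y -> le y x -> x = y;
  le_add : forall x y z, le x y -> le (x + z) (y + z);
  le_scale : forall (a : R) x, 0 <= a -> le 0 x -> le 0 (a *: x);
  join_ubl : forall x y, le x (join x y);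
  join_ubr : forall x y, le y (join x y);
  join_lub : forall x y z, le x z -> le y z -> le (join x y) z;
  meet_lbl : forall x y, le (meet x y) x;
  meet_lbr : forall x y, le (meet x y) y;
  meet_glb : forall x y z, le z x -> le z y -> le z (meet x y);
  archimedean : forall x y, le 0 x -> (forall n : nat, le (n%:R *: x) y) -> x = 0;
  norm_lattice : forall x y, le (join x (- x)) (join y (- y)) -> `|x| <= `|y|;
  mulA : forall x y z, mul x (mul y z) = mul (mul x y) z;
  mulDl : forall x y z, mul (x + y) z = mul x z + mul y z;
  mulDr : forall x y z, mul x (y + z) = mul x y + mul x z;
  mulZl : forall (a : R) x y, mul (a *: x) y = a *: mul x y;
  mulZr : forall (a : R) x y, mul x (a *: y) = a *: mul x y;
  mul_ge0 : forall x y, le 0 x -> le 0 y -> le 0 (mul x y);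
  f_prop : forall x y z, meet x y = 0 -> le 0 z ->
             meet (mul x z) y = 0 /\ meet (mul z x) y = 0;
  norm_mul : forall x y, `|mul x y| <= `|x| * `|y|
}.
Arguments BanachFAlgebra : clear implicits.

Section Defs.
Context {R : realType} {E : completeNormedModType R} (F : BanachFAlgebra R E).

Definition absE (x : E) : E := join F x (- x).

Definition directed (A : Type) (r : A -> A -> Prop) : Prop :=
  inhabited A /\ (forall a, r a a) /\ (forall a b c, r a b -> r b c -> r a c) /\
  (forall a b, exists c, r a c /\ r b c).

Definition dual_elt (f : E -> R) : Prop :=
  (forall (a : R) x y, f (a *: x + y) = a * f x + f y) /\ continuous f.

Definition weak_cvg (A : Type) (r : A -> A -> Prop) (x : A -> E) (l : E) : Prop :=
  forall f, dual_elt f -> forall eps : R, 0 < eps ->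
    exists a0, forall a, r a0 a -> `|f (x a) - f l| < eps.

Definition mw_cvg (A : Type) (r : A -> A -> Prop) (x : A -> E) (l : E) : Prop :=
  forall u, le F 0 u -> weak_cvg r (fun a => mul F (absE (x a - l)) u) 0.

Definition prod_rel (A : Type) (r : A -> A -> Prop) : A * A -> A * A -> Prop :=
  fun p q => r p.1 q.1 /\ r p.2 q.2.

Definition mw_cauchy (A : Type) (r : A -> A -> Prop) (x : A -> E) : Prop :=
  mw_cvg (prod_rel r) (fun p => x p.1 - x p.2) 0.

Definition mw_complete : Prop :=
  forall (A : Type) (r : A -> A -> Prop), directed r ->
    forall x : A -> E, mw_cauchy r x -> exists l, mw_cvg r x l.

Definition increasing (A : Type) (r : A -> A -> Prop) (x : A -> E) : Prop :=
  forall a b, r a b -> le F (x a) (x b).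

Definition decr_to0 (A : Type) (r : A -> A -> Prop) (x : A -> E) : Prop :=
  (forall a b, r a b -> le F (x b) (x a)) /\
  (forall a, le F 0 (x a)) /\
  (forall z, (forall a, le F z (x a)) -> le F z 0).

Definition o_cvg (A : Type) (r : A -> A -> Prop) (x : A -> E) (l : E) : Prop :=
  exists (B : Type) (s : B -> B -> Prop) (y : B -> E),
    directed s /\ decr_to0 s y /\
    forall b, exists a0, forall a, r a0 a -> le F (absE (x a - l)) (y b).

Definition mw_continuous : Prop :=
  forall (A : Type) (r : A -> A -> Prop), directed r ->
    forall x : A -> E, o_cvg r x 0 -> mw_cvg r x 0.

Definition incr_bdd_mw_cauchy : Prop :=
  forall (A : Type) (r : A -> A -> Prop), directed r ->
    forall (x : A -> E) (xs : E),
      (forall a, le F 0 (x a)) -> increasing r x -> (forall a, le F (x a) xs) ->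
      mw_cauchy r x.

Definition decr_mw_cvg0 : Prop :=
  forall (A : Type) (r : A -> A -> Prop), directed r ->
    forall x : A -> E, decr_to0 r x -> mw_cvg r x 0.

End Defs.

(* Weak convergence of a positive net can be tested against
   positive functionals only, because every continuous functional f is
   dominated on the positive cone by f^+ + (-f)^+ (Riesz-Kantorovich), and
   positive functionals separate the points of the positive cone (Hahn-Banach,
   proved via minimal sublinear functionals).  With this, (3) -> (1) is
   domination by the net witnessing order convergence, (1) -> (3) is trivial,
   and (3) -> (2) applies (3) to the net of gaps y - x_a, y an upper bound of
   the x_a.  For (2) -> (3), given x_a decreasing to 0, the increasing net
   x_a1 - x_a /\ x_a1 is mw-Cauchy, hence mw-converges to some l by
   mw-completeness; with m = x_a1 - l one shows (m - x_b)^+ u = 0 by weak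
   limits, then m^+ u = 0 because in an Archimedean f-algebra x_a u decreases
   to 0, and finally x_a u <= |(x_a1 - x_a) - l| u. *)

From Pilot Require Import Defs.
From HB Require Import structures.
From mathcomp Require Import all_boot all_order all_algebra.
From mathcomp Require Import all_classical all_reals all_analysis.
From mathcomp Require Import ring lra.
Set Implicit Arguments. Unset Strict Implicit. Unset Printing Implicit Defensive.
Import Order.TTheory GRing.Theory Num.Theory.
Import numFieldNormedType.Exports.
Local Open Scope ring_scope.
Local Open Scope classical_set_scope.

Section SupImage.
Variables (R : realType) (T : Type) (D : set T) (g : T -> R).

Lemma le_sup_image M w : (forall v, D v -> g v <= M) -> D w -> g w <= sup (g @` D).
Proof.
move=> gM Dw; apply: ub_le_sup; last by exists w.
by exists M => _ [v Dv <-]; exact: gM.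
Qed.

Lemma sup_image_le c : D !=set0 -> (forall v, D v -> g v <= c) -> sup (g @` D) <= c.
Proof.
move=> [w Dw] gc; apply: ge_sup; first by exists (g w), w.
by move=> _ [v Dv <-]; exact: gc.
Qed.

Lemma inf_image_le M w : (forall v, D v -> M <= g v) -> D w -> inf (g @` D) <= g w.
Proof.
move=> Mg Dw; apply: ge_inf; last by exists w.
by exists M => _ [v Dv <-]; exact: Mg.
Qed.

Lemma le_inf_image c : D !=set0 -> (forall v, D v -> c <= g v) -> c <= inf (g @` D).
Proof.
move=> [w Dw] cg; apply: lb_le_inf; first by exists (g w), w.
by move=> _ [v Dv <-]; exact: cg.
Qed.

End SupImage.

Section Sublinear.
Variables (R : realType) (V : lmodType R).

Definition sublinear (q : V -> R) :=
  (forall x y, q (x + y) <= q x + q y) /\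
  (forall (t : R) x, 0 <= t -> q (t *: x) = t * q x).

Lemma sublinear0 q : sublinear q -> q 0 = 0.
Proof. by move=> [_ qZ]; have := qZ 0 0 (lexx _); rewrite scale0r mul0r. Qed.

Lemma sublinear_ge q x : sublinear q -> - q (- x) <= q x.
Proof. by move=> qs; have := qs.1 x (- x); rewrite subrr sublinear0 // => ?; lra. Qed.

Section Shift.
Variables (q : V -> R) (z : V).
Hypothesis q_sub : sublinear q.

Definition shift x := inf ((fun t => q (x + t *: z) - t * q z) @` [set t | 0 <= t]).

Lemma shift_le x t : 0 <= t -> shift x <= q (x + t *: z) - t * q z.
Proof.
apply: (@inf_image_le _ _ _ (fun t => q (x + t *: z) - t * q z) (- q (- x))) => s s0.
rewrite lerBrDr -(q_sub.2 s z s0).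
by have := q_sub.1 (x + s *: z) (- x); rewrite addrAC subrr add0r => ?; lra.
Qed.

Lemma shift_ge x c : (forall t, 0 <= t -> c <= q (x + t *: z) - t * q z) -> c <= shift x.
Proof. by apply: le_inf_image; exists 0. Qed.

Lemma shift_le_self x : shift x <= q x.
Proof. by have := shift_le x (lexx 0); rewrite scale0r addr0 mul0r subr0. Qed.

Lemma shift_le_sub x : shift x <= q (x + z) - q z.
Proof. by have := shift_le x ler01; rewrite scale1r mul1r. Qed.

Lemma shiftD x y : shift (x + y) <= shift x + shift y.
Proof.
rewrite -lerBlDr; apply: shift_ge => s s0.
have swap (a b c : R) : a - c <= b -> a - b <= c by move=> ?; lra.
apply: swap; apply: shift_ge => t t0; rewrite lerBlDr.
apply: le_trans (shift_le (x + y) (addr_ge0 s0 t0)) _.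
rewrite scalerDl addrACA mulrDl.
by have := q_sub.1 (x + s *: z) (y + t *: z); lra.
Qed.

Lemma shift0 : shift 0 = 0.
Proof.
apply/eqP; rewrite eq_le; apply/andP; split.
  by rewrite -(sublinear0 q_sub); exact: shift_le_self.
by apply: shift_ge => s s0; rewrite add0r q_sub.2 // subrr.
Qed.

Lemma shiftZ t x : 0 <= t -> shift (t *: x) = t * shift x.
Proof.
rewrite le_eqVlt => /orP[/eqP <-|t0]; first by rewrite scale0r mul0r shift0.
apply/eqP; rewrite eq_le; apply/andP; split.
  rewrite -ler_pdivrMl //; apply: shift_ge => s s0.
  rewrite ler_pdivrMl //; apply: le_trans (shift_le _ (mulr_ge0 (ltW t0) s0)) _.
  by rewrite -scalerA -scalerDr (q_sub.2 _ _ (ltW t0)) mulrBr mulrA.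
apply: shift_ge => s s0; rewrite -ler_pdivlMl //.
apply: le_trans (shift_le x (divr_ge0 s0 (ltW t0))) _.
rewrite ler_pdivlMl // mulrBr -(q_sub.2 _ _ (ltW t0)) scalerDr scalerA mulrCA.
by rewrite divff ?gt_eqF // mulr1 mulrA mulrCA divff ?gt_eqF // mulr1.
Qed.

Lemma sublinear_shift : sublinear shift.
Proof. by split; [exact: shiftD|exact: shiftZ]. Qed.

End Shift.

Definition minimal_sublinear (m : V -> R) :=
  sublinear m /\
  forall p, sublinear p -> (forall x, p x <= m x) -> forall x, m x <= p x.

(* [shift m y] is sublinear and below [m], hence equal to [m] by minimality, and
   [shift m y x <= m (x + y) - m y]. *)
Lemma minimal_sublinear_linear m : minimal_sublinear m ->
  forall (a : R) x y, m (a *: x + y) = a * m x + m y.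
Proof.
move=> [m_sub m_min].
have mD x y : m (x + y) = m x + m y.
  have := m_min _ (sublinear_shift y m_sub) (shift_le_self y m_sub) x.
  have := shift_le_sub y m_sub x; have := m_sub.1 x y; lra.
have mN x : m (- x) = - m x.
  by have := mD x (- x); rewrite subrr sublinear0 // => ?; lra.
move=> a x y; rewrite mD; congr (_ + _).
have [a0|a0] := leP 0 a; first exact: m_sub.2.
by rewrite -[a]opprK scaleNr mN (m_sub.2 _ _ (ltW _)) ?mulNr // oppr_gt0.
Qed.

Lemma inf_sublinear_le (A : set (V -> R)) (q : V -> R) x s :
  (forall s, A s -> sublinear s /\ forall x, s x <= q x) -> A s ->
  inf ((fun s => s x) @` A) <= s x.
Proof.
move=> As; apply: (inf_image_le (M := - q (- x))) => s' /As [s'_sub s'q].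
by apply: le_trans (sublinear_ge x s'_sub); rewrite lerN2.
Qed.

Lemma sublinear_inf (A : set (V -> R)) (q : V -> R) :
  A !=set0 -> (forall s, A s -> sublinear s /\ forall x, s x <= q x) ->
  (forall s s', A s -> A s' -> (forall x, s x <= s' x) \/ (forall x, s' x <= s x)) ->
  sublinear (fun x => inf ((fun s => s x) @` A)).
Proof.
move=> A0 As Atot; set m := fun x => _.
have m_le x s : A s -> m x <= s x by apply: (inf_sublinear_le (q := q)).
have m_ge x c : (forall s, A s -> c <= s x) -> c <= m x by exact: le_inf_image.
split=> [x y|t x].
  rewrite -lerBlDr; apply: (m_ge) => s As'.
  have swap (a b c : R) : a - c <= b -> a - b <= c by move=> ?; lra.
  apply: swap; apply: (m_ge) => s' As''; rewrite lerBlDr.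
  have [s_sub _] := As _ As'; have [s'_sub _] := As _ As''.
  case: (Atot _ _ As' As'') => ss'.
    apply: le_trans (m_le _ _ As') _; apply: le_trans (s_sub.1 x y) _.
    by have := ss' y; lra.
  apply: le_trans (m_le _ _ As'') _; apply: le_trans (s'_sub.1 x y) _.
  by have := ss' x; lra.
have m0 : m 0 = 0.
  have [s0 As0] := A0; apply/eqP; rewrite eq_le; apply/andP; split.
    by rewrite -(sublinear0 (As _ As0).1); exact: m_le.
  by apply: (m_ge) => s /As[s_sub _]; rewrite sublinear0.
rewrite le_eqVlt => /orP[/eqP <-|t0]; first by rewrite scale0r mul0r m0.
apply/eqP; rewrite eq_le; apply/andP; split.
  rewrite -ler_pdivrMl //; apply: (m_ge) => s /[dup] /As[s_sub _] As'.
  by rewrite ler_pdivrMl // -(s_sub.2 _ _ (ltW t0)); exact: m_le.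
apply: (m_ge) => s /[dup] /As[s_sub _] As'.
by rewrite (s_sub.2 _ _ (ltW t0)) ler_pM2l //; exact: m_le.
Qed.

Lemma minimal_sublinear_le q : sublinear q ->
  exists m, minimal_sublinear m /\ forall x, m x <= q x.
Proof.
move=> q_sub.
pose T := {s : V -> R | sublinear s /\ forall x, s x <= q x}.
pose below := fun (s s' : T) => `[< forall x, sval s' x <= sval s x >].
pose top : T := exist _ q (conj q_sub (fun x => lexx (q x))).
have [m m_max] : exists m : T, premaximal below m.
  apply: (ZL_preorder top).
  - by move=> s; apply/asboolP => x.
  - move=> s1 s2 s3 /asboolP s12 /asboolP s23; apply/asboolP => x.
    exact: le_trans (s23 x) (s12 x).
  move=> C Ctot; have [[s0 Cs0]|C0] := pselect (exists s, C s); last first.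
    by exists top => s Cs; exfalso; apply: C0; exists s.
  pose A := [set sval s | s in C].
  have A_sub : sublinear (fun x => inf ((fun s => s x) @` A)).
    apply: (sublinear_inf (q := q)); first by exists (sval s0), s0.
      by move=> _ [s _ <-]; exact: (svalP s).
    move=> _ _ [s Cs <-] [s' Cs' <-].
    by case: (Ctot _ _ Cs Cs') => /asboolP; [right|left].
  have A_le x s : C s -> inf ((fun s => s x) @` A) <= sval s x.
    move=> Cs; apply: (inf_sublinear_le (q := q)); last by exists s.
    by move=> _ [s' _ <-]; exact: (svalP s').
  have A_q x : inf ((fun s => s x) @` A) <= q x.
    exact: le_trans (A_le x _ Cs0) ((svalP s0).2 x).
  by exists (exist _ _ (conj A_sub A_q) : T) => s Cs; apply/asboolP => x; exact: A_le.
exists (sval m); split; last exact: (svalP m).2.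
split=> [|p p_sub pm x]; first exact: (svalP m).1.
have pq x' : p x' <= q x' by exact: le_trans (pm x') ((svalP m).2 x').
have /asboolP := m_max (exist _ p (conj p_sub pq)) (asboolT pm); exact.
Qed.

Lemma linear_le_sublinear q : sublinear q -> exists m : V -> R,
  (forall (a : R) x y, m (a *: x + y) = a * m x + m y) /\ forall x, m x <= q x.
Proof.
move=> /minimal_sublinear_le [m [m_min mq]].
by exists m; split => //; exact: minimal_sublinear_linear.
Qed.

End Sublinear.

Section DualSpace.
Variables (R : realType) (E : completeNormedModType R).

Definition linear_functional (f : E -> R) :=
  forall (a : R) x y, f (a *: x + y) = a * f x + f y.

Definition linear_of_functional (f : E -> R) (flin : linear_functional f) : {linear E -> R^o} :=
  HB.pack f (GRing.isLinear.Build _ _ _ _ f flin).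

Lemma bounded_dual_elt (f : E -> R) (C : R) : linear_functional f ->
  (forall x, `|f x| <= C * `|x|) -> dual_elt f.
Proof.
move=> flin fC; split => //.
apply: (bounded_linear_continuous (f := linear_of_functional flin)).
apply/linear_boundedP; exists C; split; first exact: num_real.
by move=> r Cr x; apply: le_trans (fC x) _; rewrite ler_wpM2r // ltW.
Qed.

Lemma dual_elt_bounded (f : E -> R) :
  dual_elt f -> exists2 C : R, 0 <= C & forall x, `|f x| <= C * `|x|.
Proof.
move=> [flin fcont].
have := continuous_linear_bounded 0 (f := linear_of_functional flin) (fcont 0).
by move=> /linear_boundedP /pinfty_ex_gt0 [C C0 fC]; exists C => //; exact: ltW.
Qed.

Section Linear.
Variable f : E -> R.
Hypothesis flin : linear_functional f.

Lemma dual0 : f 0 = 0. Proof. exact: (raddf0 (linear_of_functional flin)). Qed.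
Lemma dualD x y : f (x + y) = f x + f y.
Proof. exact: (raddfD (linear_of_functional flin)). Qed.
Lemma dualN x : f (- x) = - f x.
Proof. exact: (raddfN (linear_of_functional flin)). Qed.
Lemma dualB x y : f (x - y) = f x - f y.
Proof. exact: (raddfB (linear_of_functional flin)). Qed.
Lemma dualZ a x : f (a *: x) = a * f x.
Proof. by have := flin a x 0; rewrite addr0 dual0 addr0. Qed.

End Linear.

Lemma dual_eltN (f : E -> R) : dual_elt f -> dual_elt (fun x => - f x).
Proof.
move=> /[dup] [[flin _]] /dual_elt_bounded [C _ fC].
apply: (@bounded_dual_elt _ C) => [a x y|x]; last by rewrite normrN.
by rewrite flin opprD mulrN.
Qed.

Lemma dual_eltD (f g : E -> R) : dual_elt f -> dual_elt g -> dual_elt (fun x => f x + g x).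
Proof.
move=> /[dup] [[flin _]] /dual_elt_bounded [C _ fC].
move=> /[dup] [[glin _]] /dual_elt_bounded [D _ gD].
apply: (@bounded_dual_elt _ (C + D)) => [a x y|x]; first by rewrite flin glin; ring.
by rewrite (le_trans (ler_normD _ _)) // mulrDl lerD.
Qed.

End DualSpace.

Section BanachFAlgebraTheory.
Variables (R : realType) (E : completeNormedModType R) (F : BanachFAlgebra R E).
Local Notation "x ⊑ y" := (Defs.le F x y) (at level 70).
Local Notation "x ⊔ y" := (Defs.join F x y) (at level 45, left associativity).
Local Notation "x ⊓ y" := (Defs.meet F x y) (at level 45, left associativity).
Local Notation mul := (Defs.mul F).
Local Notation lev_refl := (@Defs.le_refl _ _ F).
Local Notation lev_trans := (@Defs.le_trans _ _ F).
Local Notation lev_anti := (@Defs.le_anti _ _ F).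
Local Notation levD2r := (@Defs.le_add _ _ F).
Local Notation scalev_ge0 := (@Defs.le_scale _ _ F).
Local Notation levUl := (@Defs.join_ubl _ _ F).
Local Notation levUr := (@Defs.join_ubr _ _ F).
Local Notation levUx := (@Defs.join_lub _ _ F).
Local Notation levIl := (@Defs.meet_lbl _ _ F).
Local Notation levIr := (@Defs.meet_lbr _ _ F).
Local Notation levxI := (@Defs.meet_glb _ _ F).
Local Notation mulv_ge0 := (@Defs.mul_ge0 _ _ F).
#[local] Hint Resolve Defs.le_refl : core.

Lemma levD2l x y z : x ⊑ y -> z + x ⊑ z + y.
Proof. by rewrite ![z + _]addrC; exact: levD2r. Qed.

Lemma levD x y z w : x ⊑ y -> z ⊑ w -> x + z ⊑ y + w.
Proof. by move=> xy zw; apply: lev_trans (levD2r z xy) (levD2l y zw). Qed.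

Lemma subv_ge0 x y : (0 ⊑ y - x) <-> (x ⊑ y).
Proof.
split=> [|xy]; last by have := levD2r (- x) xy; rewrite subrr.
by move=> /(levD2r x); rewrite add0r subrK.
Qed.

Lemma levBlDr x y z : (x - y ⊑ z) <-> (x ⊑ z + y).
Proof.
by split=> [/(levD2r y)|/(levD2r (- y))]; rewrite ?subrK ?addrK.
Qed.

Lemma levBrDr x y z : (x ⊑ y - z) <-> (x + z ⊑ y).
Proof.
by split=> [/(levD2r z)|/(levD2r (- z))]; rewrite ?subrK ?addrK.
Qed.

Lemma levN2 x y : x ⊑ y -> - y ⊑ - x.
Proof. by move=> /subv_ge0 xy; apply/subv_ge0; rewrite opprK addrC. Qed.

Lemma addv_ge0 x y : 0 ⊑ x -> 0 ⊑ y -> 0 ⊑ x + y.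
Proof. by move=> x0 y0; have := levD x0 y0; rewrite addr0. Qed.

Lemma oppv_le0 x : 0 ⊑ x -> - x ⊑ 0.
Proof. by move=> /levN2; rewrite oppr0. Qed.

Lemma levZ2l (t : R) x y : 0 <= t -> x ⊑ y -> t *: x ⊑ t *: y.
Proof. by move=> t0 /subv_ge0 xy; apply/subv_ge0; rewrite -scalerBr; exact: scalev_ge0. Qed.

Lemma meetC x y : x ⊓ y = y ⊓ x.
Proof.
by apply: lev_anti; apply: levxI; (exact: levIr || exact: levIl).
Qed.

Lemma joinC x y : x ⊔ y = y ⊔ x.
Proof.
by apply: lev_anti; apply: levUx; (exact: levUr || exact: levUl).
Qed.

Lemma meet_l x y : x ⊑ y -> x ⊓ y = x.
Proof.
move=> xy; apply: lev_anti; first exact: levIl.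
exact: levxI (lev_refl x) xy.
Qed.

Lemma meet_r x y : y ⊑ x -> x ⊓ y = y.
Proof. by move=> yx; rewrite meetC meet_l. Qed.

Lemma join_r x y : x ⊑ y -> x ⊔ y = y.
Proof.
move=> xy; apply: lev_anti; last exact: levUr.
exact: levUx xy (lev_refl y).
Qed.

Lemma join_l x y : y ⊑ x -> x ⊔ y = x.
Proof.
move=> yx; apply: lev_anti; last exact: levUl.
exact: levUx (lev_refl x) yx.
Qed.

Lemma levI2 x x' y y' : x ⊑ x' -> y ⊑ y' -> x ⊓ y ⊑ x' ⊓ y'.
Proof.
move=> xx' yy'; apply: levxI.
  exact: lev_trans (levIl _ _) xx'.
exact: lev_trans (levIr _ _) yy'.
Qed.

Lemma levU2 x x' y y' : x ⊑ x' -> y ⊑ y' -> x ⊔ y ⊑ x' ⊔ y'.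
Proof.
move=> xx' yy'; apply: levUx.
  exact: lev_trans xx' (levUl _ _).
exact: lev_trans yy' (levUr _ _).
Qed.

Lemma joinD x y z : (x ⊔ y) + z = (x + z) ⊔ (y + z).
Proof.
apply: lev_anti.
  by apply/levBrDr; apply: levUx; apply/levBrDr; [exact: levUl|exact: levUr].
by apply: levUx; apply: levD2r; [exact: levUl|exact: levUr].
Qed.

Lemma meetD x y z : (x ⊓ y) + z = (x + z) ⊓ (y + z).
Proof.
apply: lev_anti.
  by apply: levxI; apply: levD2r; [exact: levIl|exact: levIr].
by apply/levBlDr; apply: levxI; apply/levBlDr; [exact: levIl|exact: levIr].
Qed.

Lemma meet_addr_le w p k : 0 ⊑ k -> w ⊓ (p + k) ⊑ w ⊓ p + k.
Proof.
move=> k0; rewrite meetD; apply: levI2 (lev_refl _).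
by have := levD2l w k0; rewrite addr0.
Qed.

Lemma scalev_join (t : R) x y : 0 <= t -> t *: (x ⊔ y) = t *: x ⊔ t *: y.
Proof.
rewrite le_eqVlt => /orP[/eqP <-|t0]; first by rewrite !scale0r join_l //; exact: lev_refl.
apply: lev_anti; last first.
  by apply: levUx; apply: levZ2l (ltW t0) _;
    [exact: levUl|exact: levUr].
have tn0 := lt0r_neq0 t0; have ti0 : 0 <= t^-1 by rewrite invr_ge0 ltW.
have h : x ⊔ y ⊑ t^-1 *: (t *: x ⊔ t *: y).
  by apply: levUx; [rewrite -{1}[x](scalerK tn0)|rewrite -{1}[y](scalerK tn0)];
    apply: levZ2l ti0 _; [exact: levUl|exact: levUr].
by have := levZ2l (ltW t0) h; rewrite scalerA divff // scale1r.
Qed.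

Definition pos_part x := x ⊔ 0.
Local Notation neg_part x := (pos_part (- x)).

Lemma pos_part_ge0 x : 0 ⊑ pos_part x. Proof. exact: levUr. Qed.
#[local] Hint Resolve pos_part_ge0 : core.

Lemma pos_part_ge x : x ⊑ pos_part x. Proof. exact: levUl. Qed.
Lemma pos_part_id x : 0 ⊑ x -> pos_part x = x. Proof. exact: join_l. Qed.
Lemma pos_part_le0 x : x ⊑ 0 -> pos_part x = 0. Proof. exact: join_r. Qed.

Lemma pos_part_le x y : x ⊑ y -> pos_part x ⊑ pos_part y.
Proof. by move=> xy; apply: levU2 xy (lev_refl 0). Qed.

Lemma pos_partB_neg_part x : pos_part x - neg_part x = x.
Proof.
suff -> : neg_part x = pos_part x - x by rewrite opprB addrC subrK.
by rewrite /pos_part joinD subrr add0r joinC.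
Qed.

Lemma pos_partD x y : pos_part (x + y) ⊑ pos_part x + pos_part y.
Proof.
apply: levUx; first exact: levD (pos_part_ge x) (pos_part_ge y).
exact: addv_ge0 (pos_part_ge0 x) (pos_part_ge0 y).
Qed.

Lemma pos_partZ (t : R) x : 0 <= t -> pos_part (t *: x) = t *: pos_part x.
Proof. by move=> t0; rewrite /pos_part scalev_join // scaler0. Qed.

Lemma abs_ge0 x : 0 ⊑ absE F x.
Proof.
suff h : 0 ⊑ 2%:R *: absE F x.
  have i2 : 0 <= (2%:R : R)^-1 by rewrite invr_ge0 ler0n.
  have := levZ2l i2 h.
  by rewrite scaler0 scalerA mulVf ?pnatr_eq0 // scale1r.
rewrite scaler_nat mulr2n -(subrr x).
exact: levD (levUl _ _) (levUr _ _).
Qed.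

Lemma abs_id x : 0 ⊑ x -> absE F x = x.
Proof. by move=> x0; apply: join_l; exact: lev_trans (oppv_le0 x0) x0. Qed.

Lemma pos_part_le_abs x : pos_part x ⊑ absE F x.
Proof. exact: levUx (levUl _ _) (abs_ge0 x). Qed.

Lemma norm_le x y : 0 ⊑ x -> x ⊑ y -> `|x| <= `|y|.
Proof.
move=> x0 xy; apply: (@Defs.norm_lattice _ _ F); change (absE F x ⊑ absE F y).
by rewrite !abs_id //; exact: lev_trans xy.
Qed.

Lemma norm_pos_part_le x : `|pos_part x| <= `|x|.
Proof.
apply: (@Defs.norm_lattice _ _ F); change (absE F (pos_part x) ⊑ absE F x).
by rewrite (abs_id (pos_part_ge0 x)); exact: pos_part_le_abs.
Qed.

Lemma mulBl x y z : mul (x - y) z = mul x z - mul y z.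
Proof. by rewrite Defs.mulDl -scaleN1r Defs.mulZl scaleN1r. Qed.

Lemma levM2r u x y : 0 ⊑ u -> x ⊑ y -> mul x u ⊑ mul y u.
Proof. by move=> u0 /subv_ge0 xy; apply/subv_ge0; rewrite -mulBl; exact: mulv_ge0. Qed.

Definition positive_dual (G : E -> R) := dual_elt G /\ forall x, 0 ⊑ x -> 0 <= G x.

Lemma positive_dual_le G x y : positive_dual G -> x ⊑ y -> G x <= G y.
Proof.
by move=> [[Glin _] G0] /subv_ge0 /G0; rewrite dualB // subr_ge0.
Qed.

Section RieszKantorovich.
Variable f : E -> R.
Hypothesis f_dual : dual_elt f.

Definition rk_sup x := sup (f @` [set w | 0 ⊑ w /\ w ⊑ x]).

Lemma rk_sup_bounded : exists2 C : R, 0 <= C & forall x w, 0 ⊑ w -> w ⊑ x -> f w <= C * `|x|.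
Proof.
have [C C0 fC] := dual_elt_bounded f_dual; exists C => // x w w0 wx.
by rewrite (le_trans (ler_norm _) (le_trans (fC w) _)) // ler_wpM2l // norm_le.
Qed.

Lemma rk_sup_ge x w : 0 ⊑ w -> w ⊑ x -> f w <= rk_sup x.
Proof.
have [C _ fC] := rk_sup_bounded; move=> w0 wx.
by apply: (le_sup_image (M := C * `|x|)) => // v [v0 vx]; exact: fC.
Qed.

Lemma rk_sup_le x c : 0 ⊑ x -> (forall w, 0 ⊑ w -> w ⊑ x -> f w <= c) -> rk_sup x <= c.
Proof.
move=> x0 fc; apply: sup_image_le => [|w [w0 wx]]; last exact: fc.
by exists 0; split => //; exact: lev_refl.
Qed.

Lemma rk_sup_ge0 x : 0 ⊑ x -> 0 <= rk_sup x.
Proof. by move=> x0; rewrite -(dual0 f_dual.1); apply: rk_sup_ge. Qed.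

Lemma rk_sup_le_norm : exists2 C : R, 0 <= C & forall x, 0 ⊑ x -> rk_sup x <= C * `|x|.
Proof.
by have [C C0 fC] := rk_sup_bounded; exists C => // x x0; apply: rk_sup_le => // w; exact: fC.
Qed.

(* The Riesz decomposition [w = (w ⊓ x) + (w - w ⊓ x)] of [0 ⊑ w ⊑ x + y]. *)
Lemma rk_supD x y : 0 ⊑ x -> 0 ⊑ y -> rk_sup (x + y) = rk_sup x + rk_sup y.
Proof.
move=> x0 y0; apply/eqP; rewrite eq_le; apply/andP; split.
  apply: rk_sup_le (addv_ge0 x0 y0) _ => w w0 wxy.
  rewrite -[w](subrK (w ⊓ x)) addrC dualD; last exact: f_dual.1.
  apply: lerD; first by apply: rk_sup_ge; [exact: levxI|exact: levIr].
  apply: rk_sup_ge; first by apply/subv_ge0; exact: levIl.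
  apply/levBlDr; rewrite addrC meetD; apply: levxI => //.
  by have := levD2l w y0; rewrite addr0.
rewrite -lerBrDr; apply: rk_sup_le => // w w0 wx.
rewrite lerBrDr addrC -lerBrDr; apply: rk_sup_le => // v v0 vy.
rewrite lerBrDr -dualD; last exact: f_dual.1.
by apply: rk_sup_ge; [exact: addv_ge0|rewrite addrC; exact: levD].
Qed.

Lemma rk_sup0 : rk_sup 0 = 0.
Proof.
apply/eqP; rewrite eq_le rk_sup_ge0 // andbT.
by apply: rk_sup_le => // w w0 w_le0; rewrite (lev_anti w_le0 w0) (dual0 f_dual.1).
Qed.

Lemma rk_supZ (t : R) x : 0 <= t -> 0 ⊑ x -> rk_sup (t *: x) = t * rk_sup x.
Proof.
rewrite le_eqVlt => /orP[/eqP <-|t0] x0; first by rewrite scale0r mul0r rk_sup0.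
have tx0 : 0 ⊑ t *: x by exact: scalev_ge0 (ltW t0) x0.
apply/eqP; rewrite eq_le; apply/andP; split.
  apply: rk_sup_le => // w w0 wx; rewrite -ler_pdivrMl // -(dualZ f_dual.1).
  apply: rk_sup_ge; first by apply: scalev_ge0; rewrite ?invr_ge0 ?ltW.
  by rewrite -[x](scalerK (lt0r_neq0 t0)); apply: levZ2l; rewrite ?invr_ge0 ?ltW.
rewrite -ler_pdivlMl //; apply: rk_sup_le => // w w0 wx.
rewrite ler_pdivlMl // -(dualZ f_dual.1).
by apply: rk_sup_ge; [exact: scalev_ge0 (ltW t0) w0|exact: levZ2l (ltW t0) wx].
Qed.

(* The positive part [f^+] of [f] in the dual Banach lattice. *)
Definition dual_pos_part x := rk_sup (pos_part x) - rk_sup (pos_part (- x)).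

Lemma dual_pos_partB a b : 0 ⊑ a -> 0 ⊑ b -> dual_pos_part (a - b) = rk_sup a - rk_sup b.
Proof.
move=> a0 b0; have := pos_partB_neg_part (a - b); rewrite /dual_pos_part.
set p := pos_part _; set n := pos_part _ => pn.
have p0 : 0 ⊑ p := pos_part_ge0 _; have n0 : 0 ⊑ n := pos_part_ge0 _.
have : rk_sup (p + b) = rk_sup (a + n).
  by congr rk_sup; rewrite -[p](subrK n) pn addrAC subrK.
by rewrite !rk_supD // => ?; lra.
Qed.

Lemma dual_pos_part_id x : 0 ⊑ x -> dual_pos_part x = rk_sup x.
Proof.
by move=> x0; have := dual_pos_partB x0 (lev_refl 0); rewrite rk_sup0 !subr0.
Qed.

Lemma dual_pos_partN x : dual_pos_part (- x) = - dual_pos_part x.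
Proof. by rewrite /dual_pos_part opprK opprB. Qed.

Lemma dual_pos_part_linear : linear_functional dual_pos_part.
Proof.
have p0 := pos_part_ge0.
have lin_ge0 (a : R) x y : 0 <= a ->
    dual_pos_part (a *: x + y) = a * dual_pos_part x + dual_pos_part y.
  move=> a0; have -> : a *: x + y = (a *: pos_part x + pos_part y) -
      (a *: pos_part (- x) + pos_part (- y)).
    by rewrite -{1}(pos_partB_neg_part x) -{1}(pos_partB_neg_part y) scalerBr addrACA opprD.
  have aP z : 0 ⊑ a *: pos_part z by exact: scalev_ge0 a0 (p0 z).
  rewrite dual_pos_partB ?rk_supD ?rk_supZ //; try exact: addv_ge0.
  by rewrite /dual_pos_part; ring.
move=> a x y; have [/lin_ge0 //|a0] := leP 0 a.
have -> : a *: x = (- a) *: (- x) by rewrite scaleNr scalerN opprK.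
by rewrite lin_ge0 ?dual_pos_partN ?mulrNN // oppr_ge0 ltW.
Qed.

Lemma dual_pos_part_dual : dual_elt dual_pos_part.
Proof.
have [C C0 pC] := rk_sup_le_norm.
apply: (bounded_dual_elt (C := C + C) dual_pos_part_linear) => x.
rewrite /dual_pos_part (le_trans (ler_normB _ _)) // !ger0_norm ?rk_sup_ge0 ?pos_part_ge0 //.
rewrite mulrDl lerD // (le_trans (pC _ (pos_part_ge0 _))) // ler_wpM2l //.
  exact: (norm_pos_part_le x).
by rewrite -(normrN x); exact: (norm_pos_part_le (- x)).
Qed.

Lemma dual_pos_part_positive : positive_dual dual_pos_part.
Proof.
split; first exact: dual_pos_part_dual.
by move=> x x0; rewrite dual_pos_part_id // rk_sup_ge0.
Qed.

Lemma dual_pos_part_ge x : 0 ⊑ x -> f x <= dual_pos_part x.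
Proof. by move=> x0; rewrite dual_pos_part_id //; exact: rk_sup_ge. Qed.

End RieszKantorovich.

Lemma dual_le_positive_dual f : dual_elt f ->
  exists G, positive_dual G /\ forall x, 0 ⊑ x -> `|f x| <= G x.
Proof.
move=> f_dual; have fN_dual := dual_eltN f_dual.
exists (fun x => dual_pos_part f x + dual_pos_part (fun y => - f y) x); split.
  split; first by apply: dual_eltD; exact: dual_pos_part_dual.
  by move=> x x0; rewrite addr_ge0 // (dual_pos_part_positive _).2.
move=> x x0; have := dual_pos_part_ge f_dual x0; have := dual_pos_part_ge fN_dual x0.
have := (dual_pos_part_positive f_dual).2 x x0.
have := (dual_pos_part_positive fN_dual).2 x x0.
by rewrite ler_norml; lra.
Qed.

Lemma sublinear_norm_pos_part : sublinear (fun x : E => `|pos_part x|).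
Proof.
split=> [x y|t x t0]; last by rewrite pos_partZ // normrZ ger0_norm.
rewrite (le_trans (norm_le (pos_part_ge0 _) (pos_partD x y))) //; exact: ler_normD.
Qed.

(* Hahn-Banach below [shift q y] with [q x = ||x^+||]: the functional obtained is
   positive because [q] vanishes on the negative cone, and [G (- y) <= - ||y||]. *)
Lemma positive_dual_separates y : 0 ⊑ y -> y != 0 ->
  exists G, positive_dual G /\ 0 < G y.
Proof.
move=> y0 yn0; have q_sub := sublinear_norm_pos_part.
have [G [Glin Gq]] := linear_le_sublinear (sublinear_shift y q_sub).
have G_le x : G x <= `|pos_part x| := le_trans (Gq x) (shift_le_self y q_sub x).
have GN x : G (- x) = - G x by rewrite (dualN Glin).
exists G; split; last first.
  have := le_trans (Gq (- y)) (shift_le_sub y q_sub (- y)).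
  rewrite addNr (pos_part_id (lev_refl 0)) (pos_part_id y0) normr0 sub0r GN lerN2 => yG.
  by rewrite (lt_le_trans _ yG) // normr_gt0.
split=> [|x x0].
  apply: (bounded_dual_elt (C := 1) Glin) => x.
  rewrite mul1r ler_norml -lerNl -GN; apply/andP; split; apply: le_trans (G_le _) _.
    by rewrite -(normrN x); exact: (norm_pos_part_le (- x)).
  exact: (norm_pos_part_le x).
rewrite -oppr_le0 -GN (le_trans (G_le _)) //.
by rewrite pos_part_le0 ?normr0 //; exact: oppv_le0.
Qed.

Lemma weak_cvg0_le (A B : Type) (r : A -> A -> Prop) (s : B -> B -> Prop)
    (z : A -> E) (w : B -> E) :
  (forall a, 0 ⊑ z a) -> weak_cvg s w 0 ->
  (forall b0, exists a0, forall a, r a0 a -> exists2 b, s b0 b & z a ⊑ w b) ->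
  weak_cvg r z 0.
Proof.
move=> z0 w0 zw f f_dual e e0.
have [G [G_pos fG]] := dual_le_positive_dual f_dual.
have [b0 Gw] := w0 G G_pos.1 e e0.
have [a0 zwa] := zw b0; exists a0 => a /zwa [b b0b zwb].
rewrite (dual0 f_dual.1) subr0 (le_lt_trans (fG _ (z0 a))) //.
apply: le_lt_trans (positive_dual_le G_pos zwb) _.
by have := Gw b b0b; rewrite (dual0 G_pos.1.1) subr0; apply: le_lt_trans; exact: ler_norm.
Qed.

Lemma weak_cvg0_lb_eq0 (A : Type) (r : A -> A -> Prop) (z : A -> E) y :
  directed r -> weak_cvg r z 0 -> 0 ⊑ y -> (exists a0, forall a, r a0 a -> y ⊑ z a) ->
  y = 0.
Proof.
move=> [_ [_ [_ r_up]]] z0 y0 [a0 yz]; apply/eqP/negPn/negP => yn0.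
have [G [G_pos Gy]] := positive_dual_separates y0 yn0.
have [a1 Gz] := z0 G G_pos.1 _ Gy.
have [a [a0a a1a]] := r_up a0 a1.
have Gyz : G y <= `|G (z a)| := le_trans (positive_dual_le G_pos (yz a a0a)) (ler_norm _).
by have := Gz a a1a; rewrite (dual0 G_pos.1.1) subr0 ltNge Gyz.
Qed.

Lemma mw_cvg0_le (A B : Type) (r : A -> A -> Prop) (s : B -> B -> Prop)
    (x : A -> E) (y : B -> E) :
  mw_cvg F s y 0 ->
  (forall b0, exists a0, forall a, r a0 a ->
     exists2 b, s b0 b & absE F (x a) ⊑ absE F (y b)) ->
  mw_cvg F r x 0.
Proof.
move=> y0 xy u u0; apply: weak_cvg0_le (y0 u u0) _ => [a|b0].
  exact: mulv_ge0 (abs_ge0 _) u0.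
have [a0 xya] := xy b0; exists a0 => a /xya [b b0b xyb]; exists b => //.
by rewrite !subr0; exact: levM2r u0 xyb.
Qed.

(* With [m = y ⊓ c], the elements [y - m] and [c - m] are disjoint, hence so are
   [(y - m) u] and [c - m] in an f-algebra. *)
Lemma meet_pos_part_mul_le y c u : 0 ⊑ y -> 0 ⊑ c -> 0 ⊑ u ->
  pos_part (mul (y - c) u) ⊓ c ⊑ y.
Proof.
move=> y0 c0 u0; set m := y ⊓ c; have m0 : 0 ⊑ m := levxI y0 c0.
have ym_cm : (y - m) ⊓ (c - m) = 0 by rewrite -meetD subrr.
have [disj _] := Defs.f_prop ym_cm u0.
apply: lev_trans (levI2 (_ : _ ⊑ mul (y - m) u) (lev_refl c)) _.
  apply: levUx; last by apply: mulv_ge0 u0; apply/subv_ge0; exact: levIl.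
  by apply: (levM2r u0); apply: levD2l; apply: levN2; exact: levIr.
have -> : c = (c - m) + m by rewrite subrK.
apply: lev_trans (meet_addr_le _ _ m0) _.
by rewrite disj add0r; exact: levIl.
Qed.

Lemma le_mul_disjoint_eq0 w c u : 0 ⊑ u -> c ⊓ w = 0 -> w ⊑ mul c u -> w = 0.
Proof. by move=> u0 cw wcu; have [<- _] := Defs.f_prop cw u0; rewrite meet_r. Qed.

Section MulOrderContinuity.
Variables (A : Type) (r : A -> A -> Prop) (x : A -> E) (u : E).
Hypotheses (r_dir : directed r) (x_decr : decr_to0 F r x) (u0 : 0 ⊑ u).

Lemma decr_to0_scaled_lb_le0 (k : R) y : 0 < k -> (forall a, y ⊑ k *: x a) -> y ⊑ 0.
Proof.
move=> k0 yx; have ki0 : 0 <= k^-1 by rewrite invr_ge0 ltW.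
suff : k^-1 *: y ⊑ 0.
  by move=> /(levZ2l (ltW k0)); rewrite scalerA divff ?gt_eqF // scale1r scaler0.
apply: x_decr.2.2 => a.
by have := levZ2l ki0 (yx a); rewrite scalerA mulVf ?gt_eqF // scale1r.
Qed.

(* For [c = x a0] and [w = (k z - c u)^+], [w ⊓ c] lies below every [k x a],
   hence vanishes; so [w] is disjoint from [c u] and below [k c u], i.e. [w = 0].
   Thus [k z ⊑ c u] for all [k], and [z = 0] by the Archimedean property. *)
Lemma mul_decr_to0_lb_eq0 z : 0 ⊑ z -> (forall a, z ⊑ mul (x a) u) -> z = 0.
Proof.
move=> z0 zx; have [[a0] _] := r_dir; set c := x a0; have c0 : 0 ⊑ c := x_decr.2.1 a0.
have cu0 : 0 ⊑ mul c u := mulv_ge0 c0 u0.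
apply: (@Defs.archimedean _ _ F z (mul c u) z0) => -[|n]; first by rewrite scale0r.
set k : R := n.+1%:R; have k0 : 0 < k by rewrite ltr0Sn.
set w := pos_part (k *: z - mul c u).
have wc_lb a : w ⊓ c ⊑ k *: x a.
  apply: lev_trans (meet_pos_part_mul_le (scalev_ge0 (ltW k0) (x_decr.2.1 a)) c0 u0).
  apply: levI2 (lev_refl c); apply: pos_part_le; rewrite mulBl Defs.mulZl.
  by apply: levD2r; exact: levZ2l (ltW k0) (zx a).
have wc0 : c ⊓ w = 0.
  rewrite meetC; apply: lev_anti; first exact: decr_to0_scaled_lb_le0 k0 wc_lb.
  exact: levxI (pos_part_ge0 _) c0.
have w0 : w = 0.
  apply: (le_mul_disjoint_eq0 (u := k *: u) (scalev_ge0 (ltW k0) u0) wc0).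
  rewrite Defs.mulZr; apply: levUx; last exact: scalev_ge0 (ltW k0) cu0.
  apply/levBlDr; apply: lev_trans (levZ2l (ltW k0) (zx a0)) _.
  by have := levD2l (k *: mul c u) cu0; rewrite addr0.
by have := pos_part_ge (k *: z - mul c u); rewrite -/w w0 => /levBlDr; rewrite add0r.
Qed.

Lemma decr_to0_mulr : decr_to0 F r (fun a => mul (x a) u).
Proof.
split; first by move=> a b rab; exact: levM2r u0 (x_decr.1 a b rab).
split; first by move=> a; exact: mulv_ge0 (x_decr.2.1 a) u0.
move=> z zx; apply: lev_trans (pos_part_ge z) _.
rewrite (mul_decr_to0_lb_eq0 (pos_part_ge0 z)) // => a.
exact: levUx (zx a) (mulv_ge0 (x_decr.2.1 a) u0).
Qed.

End MulOrderContinuity.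

Section UpperBoundGaps.
Variables (A : Type) (r : A -> A -> Prop) (x : A -> E) (xs : E).
Hypotheses (r_dir : directed r) (x_incr : increasing F r x) (x_bd : forall a, x a ⊑ xs).

(* The gaps [y - x a], with [y] ranging over the upper bounds of [x], decrease
   to [0]: they stand in for [sup x - x a] when the supremum does not exist. *)
Definition ub_index := (A * {y : E | forall a, x a ⊑ y})%type.
Definition ub_rel (p q : ub_index) := r p.1 q.1 /\ sval q.2 ⊑ sval p.2.
Definition ub_gap (p : ub_index) := sval p.2 - x p.1.

Lemma ub_rel_directed : directed ub_rel.
Proof.
have [[a0] [r_refl [r_trans r_up]]] := r_dir.
split; first exact: (inhabits (a0, exist _ xs x_bd)).
split; first by move=> p; split.
split=> [p q t [pq1 pq2] [qt1 qt2]|p q].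
  by split; [exact: r_trans pq1 qt1|exact: lev_trans qt2 pq2].
have [c [pc qc]] := r_up p.1 q.1.
have ub a : x a ⊑ sval p.2 ⊓ sval q.2 by apply: levxI; [exact: (svalP p.2)|exact: (svalP q.2)].
by exists (c, exist _ _ ub); split; split => //=; [exact: levIl|exact: levIr].
Qed.

Lemma ub_gap_ge0 p : 0 ⊑ ub_gap p.
Proof. by apply/subv_ge0; exact: (svalP p.2). Qed.

Lemma ub_gap_decr_to0 : decr_to0 F ub_rel ub_gap.
Proof.
split; first by move=> p q [pq1 pq2]; apply: levD pq2 _; apply: levN2; exact: x_incr.
split=> [|z zgap]; first exact: ub_gap_ge0.
have [[a0] _] := r_dir.
have ub n a : x a ⊑ xs - n%:R *: z.
  elim: n a => [|n IH] a; first by rewrite scale0r subr0.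
  have := zgap (a, exist _ _ IH); rewrite /ub_gap /= => /levBrDr h.
  rewrite -natr1 scalerDl scale1r opprD addrA; apply/levBrDr.
  by rewrite [x a + z]addrC.
have d0 : 0 ⊑ xs - x a0 by apply/subv_ge0.
have nz n : n%:R *: pos_part z ⊑ xs - x a0.
  rewrite -pos_partZ // -(pos_part_id d0); apply: pos_part_le.
  by apply/levBrDr; rewrite addrC; apply/levBrDr; exact: ub.
by have := pos_part_ge z; rewrite (Defs.archimedean (pos_part_ge0 z) nz).
Qed.

Lemma ub_gap_ge_abs p a a' : r p.1 a -> r p.1 a' -> absE F (x a - x a') ⊑ ub_gap p.
Proof.
move=> pa pa'; have xp := svalP p.2.
by apply: levUx; rewrite ?opprB; apply: levD (xp _) (levN2 (x_incr _)).
Qed.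

End UpperBoundGaps.

Lemma mw_continuous_decr_mw_cvg0 : mw_continuous F -> decr_mw_cvg0 F.
Proof.
move=> cont A r r_dir x x_decr; apply: cont => //.
exists A, r, x; split => //; split => // b; exists b => a rba.
by rewrite subr0 abs_id; [exact: x_decr.1|exact: x_decr.2.1].
Qed.

Lemma decr_mw_cvg0_mw_continuous : decr_mw_cvg0 F -> mw_continuous F.
Proof.
move=> decr A r r_dir x [B [s [y [s_dir [y_decr xy]]]]].
apply: (mw_cvg0_le (decr _ _ s_dir _ y_decr)) => b0.
have [a0 xya] := xy b0; exists a0 => a /xya xyb; exists b0; first exact: s_dir.2.1.
by rewrite (abs_id (y_decr.2.1 b0)) -[x a]subr0.
Qed.

Lemma decr_mw_cvg0_incr_bdd_mw_cauchy : decr_mw_cvg0 F -> incr_bdd_mw_cauchy F.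
Proof.
move=> decr A r r_dir x xs _ x_incr x_bd.
have ub_dir := ub_rel_directed r_dir x_bd.
apply: (mw_cvg0_le (decr _ _ ub_dir _ (ub_gap_decr_to0 r_dir x_incr x_bd))) => p.
exists (p.1, p.1) => -[a a'] [pa pa']; exists p; first exact: ub_dir.2.1.
rewrite (abs_id (ub_gap_ge0 p)); exact: (ub_gap_ge_abs x_incr pa pa').
Qed.

Lemma incr_bdd_mw_cauchy_decr_mw_cvg0 :
  mw_complete F -> incr_bdd_mw_cauchy F -> decr_mw_cvg0 F.
Proof.
move=> complete cauchy A r r_dir x x_decr u u0.
have [[a1] [_ [r_trans r_up]]] := r_dir.
pose v a := x a1 - x a ⊓ x a1.
have v_cauchy : mw_cauchy F r v.
  apply: (cauchy _ _ r_dir v (x a1)) => [a|a b rab|a].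
  - by apply/subv_ge0; exact: levIr.
  - by apply: levD2l; apply: levN2; apply: levI2 (lev_refl _); exact: x_decr.1.
  - apply/levBlDr; have := levD2l (x a1) (levxI (x_decr.2.1 a) (x_decr.2.1 a1)).
    by rewrite addr0.
have [l vl] := complete _ _ r_dir v v_cauchy.
set m := x a1 - l.
have vE b : r a1 b -> v b - l = m - x b.
  by move=> a1b; rewrite /v meet_l; [rewrite /m addrAC|exact: x_decr.1].
have vlu := vl u u0.
have tail0 b : r a1 b -> mul (pos_part (m - x b)) u = 0.
  move=> a1b; apply: (weak_cvg0_lb_eq0 r_dir vlu); first exact: mulv_ge0.
  exists b => c bc; apply: (levM2r u0); rewrite vE; last exact: r_trans a1b bc.
  apply: lev_trans (pos_part_le_abs _); apply: pos_part_le; apply: levD2l.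
  by apply: levN2; exact: x_decr.1.
have m0 : mul (pos_part m) u = 0.
  apply: lev_anti; last exact: mulv_ge0.
  apply: (decr_to0_mulr r_dir x_decr u0).2.2 => a; have [b [ab a1b]] := r_up a a1.
  apply: lev_trans (levM2r u0 (x_decr.1 _ _ ab)).
  rewrite -[mul (x b) u]add0r -(tail0 b a1b) -Defs.mulDl; apply: (levM2r u0).
  apply: levUx; last exact: addv_ge0 (pos_part_ge0 _) (x_decr.2.1 b).
  by apply/(levBlDr _ (x b)); exact: pos_part_ge.
apply: (weak_cvg0_le _ vlu) => [a|b0]; first exact: mulv_ge0 (abs_ge0 _) u0.
have [a0 [b0a0 a1a0]] := r_up b0 a1; exists a0 => a a0a; exists a; first exact: r_trans b0a0 a0a.
rewrite subr0 (abs_id (x_decr.2.1 a)) -[mul (absE F _) u]addr0 -m0 -Defs.mulDl.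
apply: (levM2r u0); rewrite vE; last exact: r_trans a1a0 a0a.
have {1}<- : - (m - x a) + m = x a by rewrite opprB subrK.
exact: (levD (levUr (m - x a) (- (m - x a))) (pos_part_ge m)).
Qed.

End BanachFAlgebraTheory.

Theorem theorem2p17 (R : realType) (E : completeNormedModType R)
    (F : BanachFAlgebra R E) :
  mw_complete F ->
  (mw_continuous F <-> incr_bdd_mw_cauchy F) /\
  (incr_bdd_mw_cauchy F <-> decr_mw_cvg0 F).
Proof.
move=> complete; split; split.
- by move=> /mw_continuous_decr_mw_cvg0; exact: decr_mw_cvg0_incr_bdd_mw_cauchy.
- by move=> /(incr_bdd_mw_cauchy_decr_mw_cvg0 complete); exact: decr_mw_cvg0_mw_continuous.
- exact: incr_bdd_mw_cauchy_decr_mw_cvg0.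
- exact: decr_mw_cvg0_incr_bdd_mw_cauchy.
Qed.
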